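(* For every constant $\varepsilon>0$ there exists an online algorithm for $\textsc{Online-Sorting}[1+\varepsilon,n]$ with competitive ratio $2^{O(\sqrt{\log n\,\log\log n})}$, i.e., whose cost on every stream of $n$ reals in $[0,1]$ is at most $2^{O(\sqrt{\log n\log\log n})}$.
   Context: $\textsc{Online-Sorting}[\gamma,n]$ (for $\gamma\ge 1$): there is an array $A$ consisting of $\gamma n$ initially empty cells, ordered from left to right. A stream of $n$ reals $s_1,\dots,s_n\in[0,1]$ arrives one at a time. An online algorithm must place each $s_i$ into an empty cell of $A$, irrevocably, before $s_{i+1}$ is revealed. After all reals are placed, let $r_1,\dots,r_n$ be the reals in left-to-right order in $A$, with $r_0:=0$, $r_{n+1}:=1$; the cost is $\sum_{i=0}^{n}|r_{i+1}-r_i|$. The offline optimum has cost exactly $1$, so an algorithm has competitive ratio $\Delta$ if its cost is at most $\Delta$ on every stream of $n$ reals. *)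

From Stdlib Require Import Reals Lra Lia List ZArith.
Import ListNotations.
Open Scope R_scope.

(* A deterministic online algorithm: given the history of previously revealed
   reals (in order) and the current real, it returns the (0-based) index of
   the cell in which the current real is placed.  Since the algorithm is
   deterministic, the history of reals determines all earlier placements. *)
Definition online_alg := list R -> R -> nat.

Fixpoint positions (A : online_alg) (hist : list R) (s : list R) : list nat :=
  match s with
  | nil => nil
  | x :: t => A hist x :: positions A (hist ++ [x]) t
  end.

(* Placement is legal in an array of [m] cells: every chosen cell exists and
   no cell is used twice (each real goes into an empty cell). *)
Definition valid_run (A : online_alg) (m : nat) (s : list R) : Prop :=
  NoDup (positions A nil s) /\ Forall (fun j => (j < m)%nat) (positions A nil s).

Fixpoint cell_content (ps : list (nat * R)) (j : nat) : option R :=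
  match ps with
  | nil => None
  | (k, x) :: t => if Nat.eqb k j then Some x else cell_content t j
  end.

Definition arranged (m : nat) (ps : list (nat * R)) : list R :=
  flat_map (fun j => match cell_content ps j with Some x => [x] | None => [] end)
           (seq 0 m).

Fixpoint cost_from (prev : R) (l : list R) : R :=
  match l with
  | nil => Rabs (1 - prev)
  | x :: t => Rabs (x - prev) + cost_from x t
  end.

(* Cost of running [A] on stream [s] with [m] cells (r_0 = 0, r_{n+1} = 1). *)
Definition run_cost (A : online_alg) (m : nat) (s : list R) : R :=
  cost_from 0 (arranged m (combine (positions A nil s) s)).

Definition num_cells (gamma : R) (n : nat) : nat :=
  Z.to_nat (Int_part (gamma * INR n)).

From Stdlib Require Import Reals Lra Lia List Bool ZArith FinFun.
Import ListNotations.
Open Scope R_scope.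

(* Split [0,1] into k equal intervals and the array into blocks of b cells. Each block serves
   one interval: the reals of an interval are rescaled by x |-> kx - j to [0,1] and placed, by a
   recursive algorithm sorting c reals into b cells, in the current block of that interval until
   it holds c reals, when a fresh block is opened. The rescaling stretches by k, so a block
   adds at most F/k + 1 to the variation of the array; and since only one block per interval is
   not full, B blocks suffice as soon as n + ck <= cB. Nesting d levels, each with k of its B
   blocks as slack, sorts (B - k)^d reals into B^d cells at cost O(d B (B/k)^d), and a top level
   of about (1 + eps) n / B^d such blocks handles any n. With B/k = r of order d / eps,
   d of order sqrt (log n / log log n) and B^d of order eps n, the logarithm of the cost is
   O(d log r + log n / d) = O(sqrt (log n log log n)). *)

(** * Total variation *)

Definition in01 (x : R) : Prop := 0 <= x <= 1.

Fixpoint variation_from (p : R) (l : list R) : R :=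
  match l with nil => 0 | x :: t => Rabs (x - p) + variation_from x t end.

Definition variation (l : list R) : R :=
  match l with nil => 0 | x :: t => variation_from x t end.

Lemma variation_from_ge0 l p : 0 <= variation_from p l.
Proof.
  revert p; induction l as [|x t IH]; intros p; simpl; [lra|].
  pose proof (Rabs_pos (x - p)); pose proof (IH x); lra.
Qed.

Lemma variation_ge0 l : 0 <= variation l.
Proof. destruct l; simpl; [lra | apply variation_from_ge0]. Qed.

Lemma variation_from_le l p :
  in01 p -> Forall in01 l -> variation_from p l <= variation l + 1.
Proof.
  intros Hp Hl; destruct Hl as [|x t Hx _]; simpl; [lra|].
  unfold in01 in *; assert (Rabs (x - p) <= 1) by (apply Rabs_le; lra); lra.
Qed.

Lemma cost_from_le_variation l :
  Forall in01 l -> cost_from 0 l <= variation l + 2.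
Proof.
  intros Hl.
  assert (Hcost : forall p, in01 p -> cost_from p l <= variation_from p l + 1).
  { induction Hl as [|x t Hx _ IH]; intros p Hp; simpl.
    - unfold in01 in Hp; rewrite Rabs_right; lra.
    - specialize (IH x Hx); lra. }
  assert (H0 : in01 0) by (unfold in01; lra).
  pose proof (Hcost 0 H0); pose proof (variation_from_le l 0 H0 Hl); lra.
Qed.

Lemma last_cons_cons {A : Type} (l : list A) x p : last (x :: l) p = last l x.
Proof.
  revert x p; induction l as [|y t IH]; intros x p; [reflexivity|].
  change (last (y :: t) p = last (y :: t) x); rewrite !IH; reflexivity.
Qed.

Lemma variation_from_app l1 l2 p :
  variation_from p (l1 ++ l2) = variation_from p l1 + variation_from (last l1 p) l2.
Proof.
  revert p; induction l1 as [|x t IH]; intros p; cbn [app variation_from]; [simpl; lra|].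
  rewrite IH, last_cons_cons; lra.
Qed.

Lemma last_in01 l p : in01 p -> Forall in01 l -> in01 (last l p).
Proof.
  intros Hp Hl; revert p Hp; induction Hl as [|x t Hx _ IH]; intros p Hp; [exact Hp|].
  rewrite last_cons_cons; apply IH, Hx.
Qed.

Lemma variation_app l1 l2 :
  Forall in01 l1 -> Forall in01 l2 ->
  variation (l1 ++ l2) <= variation l1 + variation l2 + 1.
Proof.
  intros H1 H2; destruct H1 as [|x t Hx Ht]; simpl.
  - pose proof (variation_ge0 l2); lra.
  - rewrite variation_from_app.
    pose proof (variation_from_le l2 (last t x) (last_in01 t x Hx Ht) H2); lra.
Qed.

Lemma variation_flat_map {A : Type} (f : A -> list R) (L : list A) F :
  (forall i, In i L -> Forall in01 (f i) /\ variation (f i) <= F) ->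
  variation (flat_map f L) <= INR (length L) * (F + 1).
Proof.
  induction L as [|a L IH]; intros H; cbn [flat_map length]; [simpl; lra|].
  destruct (H a (or_introl eq_refl)) as [Ha1 Ha2].
  assert (Hr : Forall in01 (flat_map f L)).
  { apply Forall_flat_map, Forall_forall; intros x Hx; apply (H x (or_intror Hx)). }
  pose proof (variation_app _ _ Ha1 Hr).
  pose proof (IH (fun i Hi => H i (or_intror Hi))).
  rewrite S_INR; lra.
Qed.

Lemma variation_map_affine (g : R -> R) a c l :
  0 <= a -> (forall y, In y l -> g y = a * y - c) -> variation (map g l) = a * variation l.
Proof.
  intros Ha Hg; destruct l as [|x t]; simpl; [ring|].
  rewrite (Hg x (or_introl eq_refl)).
  assert (Ht : forall y, In y t -> g y = a * y - c) by (intros; apply Hg; simpl; auto).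
  clear Hg; revert x; induction t as [|y t IH]; intros x; simpl; [ring|].
  rewrite (Ht y (or_introl eq_refl)), (IH (fun z Hz => Ht z (or_intror Hz)) y).
  replace (a * y - c - (a * x - c)) with (a * (y - x)) by ring.
  rewrite Rabs_mult, (Rabs_right a) by lra; ring.
Qed.

(** * Reading off the array *)

Definition option_list (o : option R) : list R :=
  match o with Some x => [x] | None => [] end.

Lemma arranged_flat_map m ps :
  arranged m ps = flat_map (fun j => option_list (cell_content ps j)) (seq 0 m).
Proof. reflexivity. Qed.

Lemma cell_content_In ps j y : cell_content ps j = Some y -> In (j, y) ps.
Proof.
  induction ps as [|[i x] t IH]; simpl; [discriminate|].
  destruct (Nat.eqb_spec i j) as [->|_]; [intros [= ->]; auto | auto].
Qed.

Lemma cell_content_notin ps j : (forall p, In p ps -> fst p <> j) -> cell_content ps j = None.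
Proof.
  induction ps as [|[i x] t IH]; simpl; intros H; [reflexivity|].
  destruct (Nat.eqb_spec i j) as [E|_]; [exfalso; exact (H (i, x) (or_introl eq_refl) E)|].
  apply IH; auto.
Qed.

Lemma cell_content_filter (P : nat * R -> bool) ps j :
  (forall p, In p ps -> fst p = j -> P p = true) ->
  cell_content (filter P ps) j = cell_content ps j.
Proof.
  induction ps as [|[i x] t IH]; simpl; intros H; [reflexivity|].
  destruct (Nat.eqb_spec i j) as [E|E].
  - rewrite (H (i, x) (or_introl eq_refl) E); simpl.
    rewrite (proj2 (Nat.eqb_eq i j) E); reflexivity.
  - rewrite <- (Nat.eqb_neq i j) in E.
    destruct (P (i, x)); simpl; [rewrite E|]; apply IH; auto.
Qed.

Lemma cell_content_map_snd (g : R -> R) ps j :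
  cell_content (map (fun p => (fst p, g (snd p))) ps) j = option_map g (cell_content ps j).
Proof.
  induction ps as [|[i x] t IH]; simpl; [reflexivity|].
  destruct (Nat.eqb i j); auto.
Qed.

Lemma cell_content_shift a ps j :
  cell_content (map (fun p => (a + fst p, snd p)%nat) ps) (a + j) = cell_content ps j.
Proof.
  induction ps as [|[i x] t IH]; simpl; [reflexivity|].
  destruct (Nat.eqb_spec i j) as [->|E].
  - rewrite Nat.eqb_refl; reflexivity.
  - replace (Nat.eqb (a + i) (a + j)) with false by (symmetry; apply Nat.eqb_neq; lia).
    exact IH.
Qed.

Lemma In_flat_map_cell_content (f : nat -> nat) L ps y :
  In y (flat_map (fun r => option_list (cell_content ps (f r))) L) ->
  exists r, In r L /\ In (f r, y) ps.
Proof.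
  intros Hy; apply in_flat_map in Hy as [r [Hr Hy]]; exists r; split; [exact Hr|].
  destruct (cell_content ps (f r)) eqn:E; simpl in Hy; [|contradiction].
  destruct Hy as [<-|[]]; apply cell_content_In, E.
Qed.

Lemma flat_map_seq_shift {B : Type} b a (f : nat -> list B) :
  flat_map f (seq a b) = flat_map (fun r => f (a + r)%nat) (seq 0 b).
Proof.
  revert a f; induction b as [|b IH]; intros a f; simpl; [reflexivity|].
  rewrite Nat.add_0_r, IH, (IH 1%nat); f_equal.
  apply flat_map_ext; intros r; f_equal; lia.
Qed.

Lemma arranged_blocks B b ps :
  arranged (B * b) ps =
  flat_map (fun i => flat_map (fun r => option_list (cell_content ps (i * b + r))) (seq 0 b))
           (seq 0 B).
Proof.
  induction B as [|B IH]; [reflexivity|].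
  rewrite arranged_flat_map; replace (S B * b)%nat with (B * b + b)%nat by lia.
  rewrite seq_app, flat_map_app, <- arranged_flat_map, IH, seq_S, flat_map_app.
  f_equal; simpl; rewrite app_nil_r, flat_map_seq_shift; reflexivity.
Qed.

Lemma arranged_extend M m ps :
  (M <= m)%nat -> (forall p, In p ps -> (fst p < M)%nat) -> arranged m ps = arranged M ps.
Proof.
  intros HM H; rewrite !arranged_flat_map.
  replace m with (M + (m - M))%nat by lia.
  rewrite seq_app, flat_map_app, flat_map_seq_shift, <- app_nil_r; f_equal.
  induction (m - M)%nat as [|e IH]; [reflexivity|].
  rewrite seq_S, flat_map_app, IH; simpl.
  rewrite cell_content_notin; [reflexivity|].
  intros p Hp; specialize (H p Hp); lia.
Qed.

Lemma positions_snoc A l h x :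
  positions A h (l ++ [x]) = positions A h l ++ [A (h ++ l) x].
Proof.
  revert h; induction l as [|y l IH]; intros h; simpl; [rewrite app_nil_r; reflexivity|].
  rewrite IH, <- app_assoc; reflexivity.
Qed.

Lemma positions_length A s h : length (positions A h s) = length s.
Proof. revert h; induction s; simpl; auto. Qed.

Lemma Forall_positions (P : nat -> Prop) A s h :
  (forall s1 x s2, s = s1 ++ x :: s2 -> P (A (h ++ s1) x)) -> Forall P (positions A h s).
Proof.
  revert h; induction s as [|y s IH]; intros h H; simpl; constructor.
  - specialize (H [] y s eq_refl); rewrite app_nil_r in H; exact H.
  - apply IH; intros s1 x s2 E; rewrite <- app_assoc.
    apply (H (y :: s1) x s2); rewrite E; reflexivity.
Qed.

(** * Routing reals to blocks *)

Definition update (f : nat -> nat) (i v : nat) : nat -> nat :=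
  fun j => if Nat.eqb j i then v else f j.

Lemma update_same f i v : update f i v i = v.
Proof. unfold update; rewrite Nat.eqb_refl; reflexivity. Qed.

Lemma update_other f i v j : j <> i -> update f i v j = f j.
Proof. intros H; unfold update; destruct (Nat.eqb_spec j i); [lia | reflexivity]. Qed.

Fixpoint sum_below (f : nat -> nat) (k : nat) : nat :=
  match k with O => O | S k' => (sum_below f k' + f k')%nat end.

Lemma sum_below_update f i v k :
  (i < k)%nat -> (sum_below (update f i v) k + f i = sum_below f k + v)%nat.
Proof.
  intros Hi.
  assert (Hlow : forall m, (m <= i)%nat -> sum_below (update f i v) m = sum_below f m).
  { induction m as [|m IH]; intros Hm; simpl; [reflexivity|].
    rewrite IH, update_other by lia; reflexivity. }
  induction k as [|k IH]; simpl; [lia|].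
  destruct (Nat.eq_dec i k) as [->|E].
  - rewrite update_same, Hlow by lia; lia.
  - rewrite update_other by lia; specialize (IH ltac:(lia)); lia.
Qed.

Lemma sum_below_le f g k :
  (forall j, (j < k)%nat -> (f j <= g j)%nat) -> (sum_below f k <= sum_below g k)%nat.
Proof.
  induction k as [|k IH]; simpl; intros H; [lia|].
  pose proof (H k ltac:(lia)); pose proof (IH (fun j Hj => H j ltac:(lia))); lia.
Qed.

Lemma sum_below_mul a f k : (sum_below (fun j => a * f j) k = a * sum_below f k)%nat.
Proof. induction k as [|k IH]; simpl; lia. Qed.

Lemma sum_below_add_const f a k : (sum_below (fun j => f j + a) k = sum_below f k + a * k)%nat.
Proof. induction k as [|k IH]; simpl; lia. Qed.

Record router := Router {
  blocks_opened : nat;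
  current_block : nat -> nat;
  block_fill : nat -> nat;
  blocks_of : nat -> nat;
  arrivals : nat -> nat;
  block_owner : nat -> nat }.

Definition router0 : router :=
  Router 0 (fun _ => 0%nat) (fun _ => 0%nat) (fun _ => 0%nat) (fun _ => 0%nat) (fun _ => 0%nat).

Fixpoint filter_hist (f : list R -> R -> bool) (h s : list R) : list R :=
  match s with
  | [] => []
  | x :: t => if f h x then x :: filter_hist f (h ++ [x]) t else filter_hist f (h ++ [x]) t
  end.

Lemma filter_hist_app f l1 l2 h :
  filter_hist f h (l1 ++ l2) = filter_hist f h l1 ++ filter_hist f (h ++ l1) l2.
Proof.
  revert h; induction l1 as [|x l1 IH]; intros h; simpl; [rewrite app_nil_r; reflexivity|].
  rewrite IH, <- app_assoc; destruct (f h x); reflexivity.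
Qed.

Lemma filter_hist_incl f s h y : In y (filter_hist f h s) -> In y s.
Proof.
  revert h; induction s as [|x s IH]; simpl; intros h Hy; [exact Hy|].
  destruct (f h x); [destruct Hy as [->|Hy]; [auto|] |]; right; exact (IH _ Hy).
Qed.

Definition handles (A : online_alg) (n m : nat) (F : R) : Prop :=
  forall s, (length s <= n)%nat -> Forall in01 s ->
    NoDup (positions A nil s) /\ Forall (fun j => (j < m)%nat) (positions A nil s) /\
    variation (arranged m (combine (positions A nil s) s)) <= F.

Lemma div_block i b r : (r < b)%nat -> ((i * b + r) / b = i)%nat.
Proof. intros H; rewrite Nat.div_add_l, Nat.div_small by lia; lia. Qed.

Section Composition.

Variables (k c : nat) (idx : R -> nat).
Hypothesis Hc : (1 <= c)%nat.
Hypothesis Hidx : forall x, (idx x < k)%nat.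

Definition reuse_block (s : router) (j : nat) : router :=
  let i := current_block s j in
  Router (blocks_opened s) (current_block s) (update (block_fill s) i (S (block_fill s i)))
         (blocks_of s) (update (arrivals s) j (S (arrivals s j))) (block_owner s).

Definition open_block (s : router) (j : nat) : router :=
  let i := blocks_opened s in
  Router (S i) (update (current_block s) j i) (update (block_fill s) i (S (block_fill s i)))
         (update (blocks_of s) j (S (blocks_of s j))) (update (arrivals s) j (S (arrivals s j)))
         (update (block_owner s) i j).

Definition can_reuse (s : router) (j : nat) : bool :=
  (0 <? blocks_of s j) && (block_fill s (current_block s j) <? c).

Definition route_step (s : router) (x : R) : nat * router :=
  let j := idx x in
  if can_reuse s j then (current_block s j, reuse_block s j)
  else (blocks_opened s, open_block s j).

Definition router_state (h : list R) : router :=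
  fold_left (fun s x => snd (route_step s x)) h router0.

Definition route (h : list R) (x : R) : nat := fst (route_step (router_state h) x).

Lemma router_state_snoc h x : router_state (h ++ [x]) = snd (route_step (router_state h) x).
Proof. unfold router_state; rewrite fold_left_app; reflexivity. Qed.

Record router_inv (s : router) (n : nat) : Prop := {
  inv_opened : blocks_opened s = sum_below (blocks_of s) k;
  (* All blocks of interval [j] except its current one are full. *)
  inv_current : forall j, (0 < blocks_of s j)%nat ->
    (c * (blocks_of s j - 1) + block_fill s (current_block s j) <= arrivals s j)%nat /\
    (current_block s j < blocks_opened s)%nat /\ block_owner s (current_block s j) = j;
  inv_unopened : forall i, (blocks_opened s <= i)%nat -> block_fill s i = 0%nat;
  inv_fill : forall i, (block_fill s i <= c)%nat;
  inv_arrivals : sum_below (arrivals s) k = n }.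

Lemma router_inv_reuse s n j :
  router_inv s n -> (j < k)%nat -> can_reuse s j = true -> router_inv (reuse_block s j) (S n).
Proof.
  intros [Hop Hcur Hun Hfill Harr] Hj Hre.
  apply andb_true_iff in Hre as [Hpos Hlt].
  apply Nat.ltb_lt in Hpos; apply Nat.ltb_lt in Hlt.
  destruct (Hcur j Hpos) as (Hj1 & Hj2 & Hj3).
  constructor; simpl; [exact Hop | | | |].
  - intros j' Hj'; destruct (Nat.eq_dec j' j) as [->|E].
    + rewrite !update_same; lia.
    + destruct (Hcur j' Hj') as (H1 & H2 & H3).
      assert (current_block s j' <> current_block s j) by congruence.
      rewrite !update_other by auto; lia.
  - intros i Hi; rewrite update_other by lia; auto.
  - intros i; destruct (Nat.eq_dec i (current_block s j)) as [->|E];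
      [rewrite update_same; lia | rewrite update_other; auto].
  - pose proof (sum_below_update (arrivals s) j (S (arrivals s j)) k Hj); lia.
Qed.

Lemma router_inv_open s n j :
  router_inv s n -> (j < k)%nat -> can_reuse s j = false -> router_inv (open_block s j) (S n).
Proof.
  intros [Hop Hcur Hun Hfill Harr] Hj Hre.
  assert (Hfull : (0 < blocks_of s j)%nat -> (c * blocks_of s j <= arrivals s j)%nat).
  { intros Hpos; destruct (Hcur j Hpos) as (H1 & _).
    apply andb_false_iff in Hre as [E|E]; apply Nat.ltb_ge in E; [lia|].
    destruct (blocks_of s j); [lia | simpl in H1; nia]. }
  constructor; simpl.
  - pose proof (sum_below_update (blocks_of s) j (S (blocks_of s j)) k Hj); lia.
  - intros j' Hj'; destruct (Nat.eq_dec j' j) as [->|E].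
    + rewrite !update_same, Hun by lia.
      destruct (blocks_of s j) eqn:Eo; [simpl; lia|].
      specialize (Hfull ltac:(lia)); split; [nia | lia].
    + rewrite update_other in Hj' by auto.
      destruct (Hcur j' Hj') as (H1 & H2 & H3).
      rewrite (update_other (current_block s)) by auto.
      rewrite !update_other by (auto || lia); lia.
  - intros i Hi; rewrite update_other by lia; apply Hun; lia.
  - intros i; destruct (Nat.eq_dec i (blocks_opened s)) as [->|E];
      [rewrite update_same, Hun; lia | rewrite update_other; auto].
  - pose proof (sum_below_update (arrivals s) j (S (arrivals s j)) k Hj); lia.
Qed.

Lemma router_inv_state h : router_inv (router_state h) (length h).
Proof.
  induction h as [|x h IH] using rev_ind.
  - assert (H0 : forall m, sum_below (fun _ => 0%nat) m = 0%nat)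
      by (induction m; simpl; lia).
    constructor; simpl; intros; rewrite ?H0; lia.
  - rewrite router_state_snoc, length_app, Nat.add_1_r; unfold route_step.
    destruct (can_reuse (router_state h) (idx x)) eqn:E;
      [apply router_inv_reuse | apply router_inv_open]; auto.
Qed.

Lemma blocks_opened_bound s n : router_inv s n -> (c * blocks_opened s <= n + c * k)%nat.
Proof.
  intros [Hop Hcur _ _ Harr]; rewrite Hop, <- sum_below_mul, <- Harr, <- sum_below_add_const.
  apply sum_below_le; intros j Hj; destruct (blocks_of s j) eqn:Eo; [lia|].
  destruct (Hcur j ltac:(lia)) as (H1 & _); rewrite Eo in H1; simpl in H1; nia.
Qed.

Lemma route_lt_opened h x : (route h x < blocks_opened (router_state (h ++ [x])))%nat.
Proof.
  rewrite router_state_snoc; unfold route, route_step.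
  destruct (can_reuse _ _) eqn:E; simpl; [|lia].
  apply andb_true_iff in E as [E _]; apply Nat.ltb_lt in E.
  apply (inv_current _ _ (router_inv_state h)); exact E.
Qed.

Lemma route_owner h x : block_owner (router_state (h ++ [x])) (route h x) = idx x.
Proof.
  rewrite router_state_snoc; unfold route, route_step.
  destruct (can_reuse _ _) eqn:E; simpl; [|apply update_same].
  apply andb_true_iff in E as [E _]; apply Nat.ltb_lt in E.
  apply (inv_current _ _ (router_inv_state h)); exact E.
Qed.

Lemma block_owner_stable t h i :
  (i < blocks_opened (router_state h))%nat ->
  (i < blocks_opened (router_state (h ++ t)))%nat /\
  block_owner (router_state (h ++ t)) i = block_owner (router_state h) i.
Proof.
  revert h; induction t as [|x t IH]; intros h Hi; [rewrite app_nil_r; auto|].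
  replace (h ++ x :: t) with ((h ++ [x]) ++ t) by (rewrite <- app_assoc; reflexivity).
  assert (Hx : (i < blocks_opened (router_state (h ++ [x])))%nat /\
               block_owner (router_state (h ++ [x])) i = block_owner (router_state h) i).
  { rewrite router_state_snoc; unfold route_step.
    destruct (can_reuse _ _); simpl; [auto | split; [lia | apply update_other; lia]]. }
  destruct Hx as [Hx1 Hx2]; destruct (IH _ Hx1) as [H1 H2]; split; congruence.
Qed.

Definition routed_to (i : nat) (h : list R) (y : R) : bool := Nat.eqb (route h y) i.

Definition block_items (i : nat) (h : list R) : list R := filter_hist (routed_to i) [] h.

Lemma block_items_snoc i h x :
  block_items i (h ++ [x]) = block_items i h ++ (if Nat.eqb (route h x) i then [x] else []).
Proof.
  unfold block_items; rewrite filter_hist_app; simpl; unfold routed_to.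
  destruct (Nat.eqb _ _); reflexivity.
Qed.

Lemma block_fill_step s x :
  let i := fst (route_step s x) in
  block_fill (snd (route_step s x)) = update (block_fill s) i (S (block_fill s i)).
Proof. unfold route_step; destruct (can_reuse _ _); reflexivity. Qed.

Lemma block_items_length i h : length (block_items i h) = block_fill (router_state h) i.
Proof.
  induction h as [|x h IH] using rev_ind; [reflexivity|].
  rewrite block_items_snoc, length_app, IH, router_state_snoc, block_fill_step.
  change (fst (route_step (router_state h) x)) with (route h x).
  destruct (Nat.eqb_spec (route h x) i) as [->|E];
    [rewrite update_same | rewrite update_other by auto]; simpl; lia.
Qed.

Lemma block_items_le i h : (length (block_items i h) <= c)%nat.
Proof. rewrite block_items_length; apply (inv_fill _ _ (router_inv_state h)). Qed.

Variables (b : nat) (A' : online_alg) (F' : R).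
Hypothesis HA : handles A' c b F'.

Definition rescale (x : R) : R := INR k * x - INR (idx x).

Hypothesis Hrescale : forall x, in01 x -> in01 (rescale x).

Definition compose : online_alg := fun h x =>
  (route h x * b + A' (map rescale (block_items (route h x) h)) (rescale x))%nat.

Lemma Forall_rescale_filter_hist f h s :
  Forall in01 s -> Forall in01 (map rescale (filter_hist f h s)).
Proof.
  rewrite Forall_forall; intros Hs; apply Forall_map, Forall_forall.
  intros y Hy; apply Hrescale, Hs, (filter_hist_incl _ _ _ _ Hy).
Qed.

Lemma offset_lt h x :
  Forall in01 (h ++ [x]) -> (A' (map rescale (block_items (route h x) h)) (rescale x) < b)%nat.
Proof.
  intros Hin.
  set (l := map rescale (block_items (route h x) (h ++ [x]))).
  assert (Hl : (length l <= c)%nat) by (unfold l; rewrite length_map; apply block_items_le).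
  destruct (HA l Hl (Forall_rescale_filter_hist _ _ _ Hin)) as [_ [Hpos _]].
  unfold l in Hpos; rewrite block_items_snoc, Nat.eqb_refl, map_app in Hpos.
  cbn [map] in Hpos; rewrite positions_snoc in Hpos.
  apply Forall_app in Hpos as [_ Hpos]; inversion Hpos; assumption.
Qed.

Lemma compose_div h x : Forall in01 (h ++ [x]) -> (compose h x / b = route h x)%nat.
Proof. intros Hin; apply div_block, offset_lt, Hin. Qed.

Lemma Forall_snoc_of_cons (h t : list R) x :
  Forall in01 (h ++ x :: t) -> Forall in01 (h ++ [x]) /\ Forall in01 ((h ++ [x]) ++ t).
Proof.
  rewrite <- app_assoc; intros Hin; split; [|exact Hin].
  apply Forall_app in Hin as [Hh Hxt]; inversion Hxt; apply Forall_app; auto.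
Qed.

Lemma block_run s h i :
  Forall in01 (h ++ s) ->
  map (fun p => (fst p, rescale (snd p)))
      (filter (fun p => Nat.eqb (fst p / b) i) (combine (positions compose h s) s))
  = map (fun p => (i * b + fst p, snd p)%nat)
      (combine (positions A' (map rescale (block_items i h))
                          (map rescale (filter_hist (routed_to i) h s)))
               (map rescale (filter_hist (routed_to i) h s))).
Proof.
  revert h; induction s as [|x t IH]; intros h Hin; [reflexivity|].
  destruct (Forall_snoc_of_cons _ _ _ Hin) as [Hx Ht].
  cbn [positions combine filter filter_hist fst snd].
  rewrite (compose_div _ _ Hx); change (routed_to i h x) with (Nat.eqb (route h x) i).
  destruct (Nat.eqb_spec (route h x) i) as [<-|E]; cbn [map fst snd];
    rewrite (IH _ Ht), block_items_snoc.
  - rewrite Nat.eqb_refl, map_app; reflexivity.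
  - rewrite (proj2 (Nat.eqb_neq _ _) E), app_nil_r; reflexivity.
Qed.

Lemma placed_owner t h :
  Forall in01 (h ++ t) ->
  forall p y, In (p, y) (combine (positions compose h t) t) ->
  idx y = block_owner (router_state (h ++ t)) (p / b).
Proof.
  revert h; induction t as [|x t IH]; intros h Hin p y Hp; [destruct Hp|].
  destruct (Forall_snoc_of_cons _ _ _ Hin) as [Hx Ht].
  replace (h ++ x :: t) with ((h ++ [x]) ++ t) by (rewrite <- app_assoc; reflexivity).
  destruct Hp as [[= <- <-]|Hp]; [|exact (IH _ Ht p y Hp)].
  rewrite (compose_div _ _ Hx).
  rewrite (proj2 (block_owner_stable t _ _ (route_lt_opened h x))), route_owner; reflexivity.
Qed.

Lemma route_lt_blocks n B h x :
  (n + c * k <= c * B)%nat -> (length (h ++ [x]) <= n)%nat -> (route h x < B)%nat.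
Proof.
  intros HB Hlen; pose proof (route_lt_opened h x).
  pose proof (blocks_opened_bound _ _ (router_inv_state (h ++ [x]))); nia.
Qed.

Lemma map_fst_combine {X Y : Type} (l : list X) (s : list Y) :
  length l = length s -> map fst (combine l s) = l.
Proof. revert s; induction l; intros [|y s] H; simpl in *; try discriminate; f_equal; auto. Qed.

Lemma NoDup_by_blocks (L : list nat) :
  (forall i, NoDup (filter (fun p => Nat.eqb (p / b) i) L)) -> NoDup L.
Proof.
  induction L as [|a L IH]; intros H; constructor.
  - intros Ha; specialize (H (a / b)%nat); simpl in H; rewrite Nat.eqb_refl in H.
    inversion H as [|? ? Hnot]; apply Hnot, filter_In; split; [exact Ha | apply Nat.eqb_refl].
  - apply IH; intros i; specialize (H i); simpl in H.
    destruct (Nat.eqb (a / b) i); [inversion H|]; auto.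
Qed.

Lemma compose_NoDup s : Forall in01 s -> NoDup (positions compose [] s).
Proof.
  intros Hin; apply NoDup_by_blocks; intros i.
  set (ps := combine (positions compose [] s) s).
  assert (Hfst : positions compose [] s = map fst ps)
    by (unfold ps; rewrite map_fst_combine; auto; apply positions_length).
  rewrite Hfst, filter_map_swap.
  replace (map fst (filter _ ps))
    with (map fst (map (fun p => (fst p, rescale (snd p)))
                       (filter (fun p => Nat.eqb (fst p / b) i) ps)))
    by (rewrite map_map; reflexivity).
  unfold ps; rewrite (block_run s [] i Hin), map_map; simpl.
  rewrite <- (map_map fst (fun o => (i * b + o)%nat)), map_fst_combine
    by apply positions_length.
  apply Injective_map_NoDup; [intros o1 o2; lia|].
  apply HA; [rewrite length_map; apply block_items_le | apply Forall_rescale_filter_hist, Hin].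
Qed.

Lemma block_variation s i :
  Forall in01 s ->
  let ps := combine (positions compose [] s) s in
  let l := flat_map (fun r => option_list (cell_content ps (i * b + r))) (seq 0 b) in
  Forall in01 l /\ INR k * variation l <= F'.
Proof.
  intros Hin ps l.
  assert (Hl : forall y, In y l -> exists r, (r < b)%nat /\ In (i * b + r, y)%nat ps).
  { intros y Hy; destruct (In_flat_map_cell_content _ _ _ _ Hy) as [r [Hr Hry]].
    apply in_seq in Hr; exists r; split; [lia | exact Hry]. }
  split.
  { apply Forall_forall; intros y Hy; destruct (Hl y Hy) as [r [_ Hry]].
    apply in_combine_r in Hry; rewrite Forall_forall in Hin; auto. }
  set (sub := map rescale (block_items i s)).
  assert (Hmap : map rescale l = arranged b (combine (positions A' [] sub) sub)).
  { unfold l; rewrite arranged_flat_map, !flat_map_concat_map, concat_map, map_map.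
    f_equal; apply map_ext_in; intros r Hr; apply in_seq in Hr.
    assert (E : option_map rescale (cell_content ps (i * b + r))
                = cell_content (combine (positions A' [] sub) sub) r).
    { rewrite <- (cell_content_filter (fun p => Nat.eqb (fst p / b) i)),
        <- cell_content_map_snd.
      - unfold ps; rewrite (block_run s [] i Hin); apply cell_content_shift.
      - intros p _ Hp; rewrite Hp, div_block by lia; apply Nat.eqb_refl. }
    rewrite <- E; destruct (cell_content ps (i * b + r)); reflexivity. }
  assert (Haff : variation (map rescale l) = INR k * variation l).
  { apply (variation_map_affine _ _ (INR (block_owner (router_state s) i))); [apply pos_INR|].
    intros y Hy; destruct (Hl y Hy) as [r [Hr Hry]].
    unfold rescale; rewrite (placed_owner s [] Hin _ _ Hry), div_block by lia; reflexivity. }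
  rewrite <- Haff, Hmap; apply HA;
    [unfold sub; rewrite length_map; apply block_items_le | apply Forall_rescale_filter_hist, Hin].
Qed.

Lemma compose_handles n B :
  (n + c * k <= c * B)%nat -> handles compose n (B * b) (INR B * (F' / INR k + 1)).
Proof.
  intros HB s Hlen Hin; split; [|split].
  - apply compose_NoDup, Hin.
  - apply Forall_positions; intros s1 x s2 E.
    assert (Hx : Forall in01 (s1 ++ [x])).
    { rewrite E in Hin; apply (Forall_snoc_of_cons _ _ _ Hin). }
    assert (Hlen' : (length (s1 ++ [x]) <= n)%nat)
      by (rewrite E, !length_app in Hlen; rewrite length_app; simpl in *; lia).
    pose proof (offset_lt _ _ Hx); pose proof (route_lt_blocks _ _ _ _ HB Hlen').
    unfold compose; simpl; nia.
  - rewrite arranged_blocks.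
    replace (INR B) with (INR (length (seq 0 B))) by (rewrite length_seq; reflexivity).
    apply variation_flat_map; intros i _.
    destruct (block_variation s i Hin) as [Hl Hv]; split; [exact Hl|].
    assert (Hk : 0 < INR k) by (apply lt_0_INR; pose proof (Hidx 0); lia).
    apply (Rmult_le_reg_l (INR k)); [exact Hk|].
    unfold Rdiv; rewrite <- Rmult_assoc, (Rmult_comm _ F'), Rmult_assoc, Rinv_r; lra.
Qed.

End Composition.

(** * Nested blocking *)

(* The cap puts [x = 1] into the last interval. *)
Definition interval_index (k : nat) (x : R) : nat :=
  Nat.min (Z.to_nat (Int_part (INR k * x))) (k - 1).

Lemma interval_index_lt k x : (1 <= k)%nat -> (interval_index k x < k)%nat.
Proof. intros; unfold interval_index; lia. Qed.

Lemma floor_nat r :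
  0 <= r -> INR (Z.to_nat (Int_part r)) <= r /\ r - 1 < INR (Z.to_nat (Int_part r)).
Proof.
  intros Hr; destruct (base_Int_part r) as [H1 H2].
  assert (0 <= Int_part r)%Z by (assert (-1 < Int_part r)%Z by (apply lt_IZR; lra); lia).
  rewrite INR_IZR_INZ, Z2Nat.id by assumption; lra.
Qed.

Lemma ceil_nat r : 0 <= r -> r < INR (Z.to_nat (up r)) <= r + 1.
Proof.
  intros Hr; destruct (archimed r) as [H1 H2].
  assert (0 <= up r)%Z by (assert (-1 < up r)%Z by (apply lt_IZR; lra); lia).
  rewrite INR_IZR_INZ, Z2Nat.id by assumption; lra.
Qed.

Lemma rescale_interval_index k x :
  (1 <= k)%nat -> in01 x -> in01 (rescale k (interval_index k) x).
Proof.
  intros Hk Hx; unfold in01, rescale, interval_index in *.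
  assert (Hkx : 0 <= INR k * x <= INR k) by (pose proof (pos_INR k); split; nra).
  destruct (floor_nat (INR k * x) ltac:(lra)) as [H1 H2].
  destruct (Nat.le_gt_cases (Z.to_nat (Int_part (INR k * x))) (k - 1)) as [Hle|Hgt].
  - rewrite Nat.min_l by exact Hle; lra.
  - rewrite Nat.min_r, minus_INR by lia; simpl.
    assert (INR k <= INR (Z.to_nat (Int_part (INR k * x)))) by (apply le_INR; lia).
    lra.
Qed.

Definition trivial_alg : online_alg := fun _ _ => 0%nat.

Lemma trivial_alg_handles : handles trivial_alg 1 1 0.
Proof.
  intros s Hlen _; destruct s as [|x [|y t]]; simpl in Hlen; try lia;
    (split; [|split]; [repeat constructor; simpl; tauto | repeat constructor |
                       unfold arranged; simpl; lra]).
Qed.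

Fixpoint nested_alg (B k t : nat) : online_alg :=
  match t with
  | O => trivial_alg
  | S t' => compose k ((B - k) ^ t') (interval_index k) (B ^ t') (nested_alg B k t')
  end.

Fixpoint nested_variation (B k t : nat) : R :=
  match t with O => 0 | S t' => INR B * (nested_variation B k t' / INR k + 1) end.

Lemma nested_alg_handles B k t :
  (1 <= k)%nat -> (k < B)%nat ->
  handles (nested_alg B k t) ((B - k) ^ t) (B ^ t) (nested_variation B k t).
Proof.
  intros Hk HB; induction t as [|t IH]; [exact trivial_alg_handles|].
  simpl; rewrite Nat.mul_comm.
  apply compose_handles; auto using interval_index_lt, rescale_interval_index.
  - pose proof (Nat.pow_nonzero (B - k) t ltac:(lia)); lia.
  - rewrite <- Nat.mul_add_distr_l; apply Nat.mul_le_mono_l; lia.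
Qed.

Lemma nested_variation_le r k t :
  (1 <= r)%nat -> (1 <= k)%nat ->
  nested_variation (r * k) k t <= INR t * INR (r * k) * INR r ^ t.
Proof.
  intros Hr Hk.
  assert (Hk' : 0 < INR k) by (apply lt_0_INR; lia).
  apply (le_INR 1) in Hr; rewrite INR_1 in Hr.
  induction t as [|t IH]; simpl nested_variation; [simpl; lra|].
  rewrite S_INR, mult_INR in *; simpl pow.
  replace (INR r * INR k * (nested_variation (r * k) k t / INR k + 1))
    with (INR r * nested_variation (r * k) k t + INR r * INR k) by (field; lra).
  pose proof (pow_R1_Rle _ (S t) Hr) as Hpow; simpl pow in Hpow.
  pose proof (Rmult_le_compat_l (INR r) _ _ ltac:(lra) IH).
  pose proof (Rmult_le_compat_l (INR r * INR k) _ _ ltac:(nra) Hpow).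
  nra.
Qed.

Lemma handles_run A n M m F s :
  handles A n M F -> (M <= m)%nat -> length s = n -> Forall in01 s ->
  valid_run A m s /\ run_cost A m s <= F + 2.
Proof.
  intros HA HM Hlen Hin; destruct (HA s ltac:(lia) Hin) as (H1 & H2 & H3).
  split; [split; [exact H1 | eapply Forall_impl; [|exact H2]; simpl; lia]|].
  unfold run_cost; rewrite (arranged_extend M m); [| exact HM |].
  - enough (Forall in01 (arranged M (combine (positions A [] s) s)))
      by (pose proof (cost_from_le_variation _ H); lra).
    apply Forall_forall; intros y Hy; rewrite arranged_flat_map in Hy.
    destruct (In_flat_map_cell_content (fun j => j) _ _ _ Hy) as [j [_ Hj]].
    apply in_combine_r in Hj; rewrite Forall_forall in Hin; auto.
  - intros [p y] Hp; apply in_combine_l in Hp; rewrite Forall_forall in H2; apply H2, Hp.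
Qed.

Lemma blocked_alg_cost r k d Btop n m :
  (2 <= r)%nat -> (1 <= k)%nat ->
  (n + (r * k - k) ^ d <= (r * k - k) ^ d * Btop)%nat -> (Btop * (r * k) ^ d <= m)%nat ->
  exists A : online_alg, forall s, length s = n -> Forall in01 s ->
    valid_run A m s /\
    run_cost A m s <= INR Btop * (INR d * INR (r * k) * INR r ^ d + 1) + 2.
Proof.
  intros Hr Hk Hcap Hm.
  set (B := (r * k)%nat) in *.
  exists (compose 1 ((B - k) ^ d) (interval_index 1) (B ^ d) (nested_alg B k d)).
  intros s Hlen Hin.
  assert (Htop : handles (compose 1 ((B - k) ^ d) (interval_index 1) (B ^ d) (nested_alg B k d))
                   n (Btop * B ^ d) (INR Btop * (nested_variation B k d / INR 1 + 1))).
  { pose proof (Nat.pow_nonzero (B - k) d ltac:(unfold B; nia)).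
    apply compose_handles; auto using interval_index_lt, rescale_interval_index; try lia.
    apply nested_alg_handles; unfold B; nia. }
  destruct (handles_run _ _ _ _ _ s Htop Hm Hlen Hin) as [Hv Hc]; split; [exact Hv|].
  pose proof (nested_variation_le r k d ltac:(lia) Hk) as Hnv; fold B in Hnv.
  pose proof (pos_INR Btop).
  rewrite INR_1 in Hc; unfold Rdiv in Hc; rewrite Rinv_1, Rmult_1_r in Hc.
  pose proof (Rmult_le_compat_l (INR Btop) (nested_variation B k d + 1)
                (INR d * INR B * INR r ^ d + 1) ltac:(lra) ltac:(lra)); lra.
Qed.

(** * Choice of parameters *)

Lemma le_of_div_le a b x : 0 < b -> a / b <= x -> a <= b * x.
Proof.
  intros Hb H; replace a with (b * (a / b)) by (field; lra); apply Rmult_le_compat_l; lra.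
Qed.

Lemma exp_le_compat x y : x <= y -> exp x <= exp y.
Proof. intros [H | ->]; [left; apply exp_increasing, H | lra]. Qed.

Lemma ln_le_compat x y : 0 < x -> x <= y -> ln x <= ln y.
Proof. intros Hx [H | ->]; [left; apply ln_increasing; assumption | lra]. Qed.

Lemma ln_le_cancel x y : 0 < x -> 0 < y -> ln x <= ln y -> x <= y.
Proof.
  intros Hx Hy H; destruct (Rle_or_lt x y) as [|Hlt]; [assumption|].
  pose proof (ln_increasing y x Hy Hlt); lra.
Qed.

Lemma ln_le_sub1 x : 0 < x -> ln x <= x - 1.
Proof. intros Hx; pose proof (exp_ineq1_le (ln x)); rewrite exp_ln in H; lra. Qed.

Lemma pow2_le_exp d : 2 ^ d <= exp (INR d).
Proof.
  induction d as [|d IH]; [simpl; rewrite exp_0; lra|].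
  rewrite S_INR, exp_plus; simpl pow.
  pose proof (exp_ineq1_le 1); pose proof (pow_le 2 d ltac:(lra)); nra.
Qed.

Lemma bernoulli_le a d : 0 <= a <= 1 -> 1 - INR d * a <= (1 - a) ^ d.
Proof.
  intros Ha; induction d as [|d IH]; [simpl; lra|].
  rewrite S_INR; simpl pow.
  pose proof (pos_INR d); pose proof (pow_le (1 - a) d ltac:(lra)); nra.
Qed.

Lemma exists_step_crossing (f : nat -> nat) X N :
  (f 1 <= X)%nat -> (X < f (S N))%nat ->
  exists k, (1 <= k)%nat /\ (f k <= X)%nat /\ (X < f (S k))%nat.
Proof.
  intros H1; induction N as [|N IH]; intros HN; [lia|].
  destruct (Nat.le_gt_cases (f (S N)) X) as [Hle|Hgt]; [exists (S N); lia | exact (IH Hgt)].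
Qed.

Lemma capacity_slack N m x y Btop delta eps :
  0 < delta <= 1 -> delta <= eps -> 16 <= delta * N -> 0 < x <= delta * N / 8 -> (1 - delta / 4) * x <= y ->
  (1 + eps) * N - 1 < m -> m < x * (Btop + 1) -> N + y <= y * Btop.
Proof.
  intros Hdelta Heps HN Hx Hy Hm1 Hm2.
  assert (HN0 : 0 < N) by (destruct (Rle_or_lt N 0); [nra | lra]).
  assert (HepsN : delta * N <= eps * N) by (apply Rmult_le_compat_r; lra).
  assert (Hgap : N + 3 * (delta * N) / 4 - 1 < x * (Btop - 1)) by lra.
  assert (Hslack : N <= (1 - delta / 4) * (N + 3 * (delta * N) / 4 - 1))
    by (assert (delta * (delta * N) <= delta * N) by nra; nra).
  assert (0 < x * (Btop - 1)) by lra.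
  assert ((1 - delta / 4) * (x * (Btop - 1)) <= y * (Btop - 1)) by nra.
  nra.
Qed.

Lemma pow_sub_ratio_ge r k d :
  (1 <= r)%nat -> (1 - INR d / INR r) * INR ((r * k) ^ d) <= INR ((r * k - k) ^ d).
Proof.
  intros Hr; assert (Hr' : 1 <= INR r) by (apply (le_INR 1), Hr).
  rewrite !pow_INR, minus_INR, mult_INR by nia.
  replace (INR r * INR k - INR k) with ((1 - 1 / INR r) * (INR r * INR k)) by (field; lra).
  rewrite (Rpow_mult_distr (1 - 1 / INR r)); apply Rmult_le_compat_r.
  - apply pow_le; pose proof (pos_INR k); nra.
  - replace (INR d / INR r) with (INR d * (1 / INR r)) by (field; lra).
    apply bernoulli_le; split; [apply Rlt_le, Rdiv_lt_0_compat; lra|].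
    apply (Rmult_le_reg_r (INR r)); [lra|]; field_simplify; lra.
Qed.

Lemma block_size_exists delta N r d :
  (1 <= r)%nat -> (1 <= d)%nat -> 16 <= delta * N -> INR r ^ d <= delta * N / 16 ->
  exists k, (1 <= k)%nat /\ INR ((r * k) ^ d) <= delta * N / 8 /\
            delta * N <= 16 * 2 ^ d * INR ((r * k) ^ d).
Proof.
  intros Hr Hd HN HrN.
  set (X := Z.to_nat (Int_part (delta * N / 8))).
  destruct (floor_nat (delta * N / 8) ltac:(lra)) as [HX1 HX2]; fold X in HX1, HX2.
  assert (HrX : (r ^ d <= X)%nat) by (apply INR_le; rewrite pow_INR; lra).
  destruct (exists_step_crossing (fun k => (r * k) ^ d)%nat X X) as (k & Hk & Hle & Hlt).
  - rewrite Nat.mul_1_r; exact HrX.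
  - assert (r * S X <= (r * S X) ^ d)%nat
      by (rewrite <- (Nat.pow_1_r (r * S X)) at 1; apply Nat.pow_le_mono_r; nia).
    nia.
  - exists k; split; [exact Hk | split; [apply le_INR in Hle; lra |]].
    assert (Hup : ((r * S k) ^ d <= 2 ^ d * (r * k) ^ d)%nat)
      by (rewrite <- Nat.pow_mul_l; apply Nat.pow_le_mono_l; nia).
    cbv beta in Hlt; apply lt_INR in Hlt; apply le_INR in Hup; rewrite mult_INR, (pow_INR 2) in Hup.
    replace (INR 2) with 2 in Hup by (simpl; lra); lra.
Qed.

Lemma top_blocks_le Btop x N q eps delta :
  0 < delta -> 0 < x -> 0 <= Btop -> 0 <= eps ->
  Btop * x <= (1 + eps) * N -> delta * N <= 16 * q * x -> Btop <= 16 * (1 + eps) / delta * q.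
Proof.
  intros Hd Hx HB He H1 H2; apply (Rmult_le_reg_r (delta * x)); [nra|].
  replace (16 * (1 + eps) / delta * q * (delta * x)) with (16 * (1 + eps) * (q * x)) by (field; lra).
  pose proof (Rmult_le_compat_l delta _ _ ltac:(lra) H1).
  pose proof (Rmult_le_compat_l (1 + eps) _ _ ltac:(lra) H2); nra.
Qed.

Lemma blocked_cost_le Btop K q P :
  0 <= Btop <= K * q -> 0 <= K -> 1 <= q -> 1 <= P -> Btop * (P + 1) + 2 <= (2 * K + 2) * q * P.
Proof. intros [H0 HB] HK Hq HP; assert (Btop * (P + 1) <= K * q * (2 * P)) by nra; nra. Qed.

Lemma blocked_parameters eps delta n R0 d :
  0 < delta <= 1 -> delta <= eps -> (1 <= d)%nat -> 4 / delta <= INR R0 ->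
  INR (R0 * d) ^ d <= sqrt (INR n) -> 16 / delta <= sqrt (INR n) ->
  let r := (R0 * d)%nat in
  exists k Btop, (1 <= k)%nat /\ (4 <= r)%nat /\ INR ((r * k) ^ d) <= INR n /\
    (n + (r * k - k) ^ d <= (r * k - k) ^ d * Btop)%nat /\
    (Btop * (r * k) ^ d <= num_cells (1 + eps) n)%nat /\
    INR Btop <= 16 * (1 + eps) / delta * 2 ^ d.
Proof.
  intros Hdelta Heps Hd HR0 Hrd Hn r.
  set (N := INR n) in *; fold r in Hrd.
  assert (Hsqrt : sqrt N * sqrt N = N) by (apply sqrt_sqrt, pos_INR).
  assert (Hds : 16 <= delta * sqrt N) by (apply le_of_div_le; lra).
  assert (HdN : 16 * sqrt N <= delta * N) by (pose proof (sqrt_pos N); nra).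
  assert (HN16 : 16 <= delta * N) by nra.
  assert (HR0d : 4 <= delta * INR R0) by (apply le_of_div_le; lra).
  assert (Hr : (4 <= r)%nat) by (assert (4 <= R0)%nat by (apply INR_le; simpl; nra); unfold r; nia).
  destruct (block_size_exists delta N r d ltac:(lia) Hd HN16 ltac:(lra)) as (k & Hk & Hx8 & Hx16).
  set (x := ((r * k) ^ d)%nat) in *.
  assert (Hx0 : 0 < INR x) by (apply lt_0_INR; unfold x; apply Nat.neq_0_lt_0, Nat.pow_nonzero; nia).
  set (m := num_cells (1 + eps) n).
  assert (Hm : INR m <= (1 + eps) * N /\ (1 + eps) * N - 1 < INR m)
    by (apply floor_nat; pose proof (pos_INR n); nra).
  exists k, (m / x)%nat; set (Btop := (m / x)%nat).
  assert (Hdiv : (Btop * x <= m)%nat /\ (m < x * (Btop + 1))%nat).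
  { pose proof (Nat.div_mod m x ltac:(apply INR_not_0; lra)) as Hdm; fold Btop in Hdm.
    pose proof (Nat.mod_upper_bound m x ltac:(apply INR_not_0; lra)); nia. }
  destruct Hdiv as [Hdiv1 Hdiv2]; fold x.
  refine (conj Hk (conj Hr (conj _ (conj _ (conj Hdiv1 _))))).
  - assert (delta * N <= N) by (pose proof (pos_INR n); nra); lra.
  - (* Only a fraction [d / r = 1 / R0 <= delta / 4] of each level is slack. *)
    assert (Hslack : (1 - delta / 4) * INR x <= INR ((r * k - k) ^ d)).
    { eapply Rle_trans; [|apply pow_sub_ratio_ge; lia]; apply Rmult_le_compat_r; [apply pos_INR|].
      unfold r; rewrite mult_INR; apply (le_INR 1) in Hd; rewrite INR_1 in Hd.
      replace (INR d / (INR R0 * INR d)) with (1 / INR R0) by (field; nra).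
      assert (1 / INR R0 <= delta / 4); [|lra].
      apply (Rmult_le_reg_r (INR R0 * 4)); [nra|]; field_simplify; nra. }
    apply lt_INR in Hdiv2; rewrite mult_INR, plus_INR, INR_1 in Hdiv2.
    apply INR_le; rewrite plus_INR, mult_INR.
    apply (capacity_slack N (INR m) (INR x) _ (INR Btop) delta eps); lra.
  - apply le_INR in Hdiv1; rewrite mult_INR in Hdiv1.
    apply (top_blocks_le _ (INR x) N); try lra; apply pos_INR.
Qed.

Lemma sorting_with_depth eps delta n R0 d :
  0 < delta <= 1 -> delta <= eps -> (1 <= d)%nat -> 4 / delta <= INR R0 ->
  INR (R0 * d) ^ d <= sqrt (INR n) -> 16 / delta <= sqrt (INR n) ->
  exists (B : nat) (A : online_alg), 1 <= INR B /\ INR B ^ d <= INR n /\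
    forall s, length s = n -> Forall in01 s ->
      valid_run A (num_cells (1 + eps) n) s /\
      run_cost A (num_cells (1 + eps) n) s
        <= (32 * (1 + eps) / delta + 2) * 2 ^ d * (INR d * INR B * INR (R0 * d) ^ d).
Proof.
  intros Hdelta Heps Hd HR0 Hrd Hn.
  destruct (blocked_parameters eps delta n R0 d Hdelta Heps Hd HR0 Hrd Hn)
    as (k & Btop & Hk & Hr & Hx & Hcap & Hm & HBtop).
  set (r := (R0 * d)%nat) in *.
  destruct (blocked_alg_cost r k d Btop _ _ ltac:(lia) Hk Hcap Hm) as [A HA].
  assert (HB1 : 1 <= INR (r * k)) by (apply (le_INR 1); nia).
  exists (r * k)%nat, A; split; [exact HB1 | split; [rewrite <- pow_INR; exact Hx|]].
  intros s Hlen Hin; destruct (HA s Hlen Hin) as [Hv Hc]; split; [exact Hv|].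
  assert (HP : 1 <= INR d * INR (r * k) * INR r ^ d).
  { apply (le_INR 1) in Hd; apply (le_INR 4) in Hr; rewrite INR_1 in Hd; simpl in Hr.
    pose proof (pow_R1_Rle (INR r) d ltac:(lra)).
    pose proof (Rmult_le_compat 1 (INR d) 1 (INR (r * k)) ltac:(lra) ltac:(lra) Hd HB1); nra. }
  eapply Rle_trans; [exact Hc|].
  replace (32 * (1 + eps) / delta + 2) with (2 * (16 * (1 + eps) / delta) + 2) by (field; lra).
  apply blocked_cost_le; [split; [apply pos_INR | exact HBtop] | | apply pow_R1_Rle; lra | exact HP].
  apply Rlt_le, Rdiv_lt_0_compat; lra.
Qed.

Lemma depth_choice R0 L :
  1 <= R0 -> exp 1 <= L ->
  let S := sqrt (L * ln L) in
  exists d : nat, (1 <= d)%nat /\ 1 <= S /\ INR d <= 2 * S /\ L <= INR d * S /\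
    INR d * ln (R0 * INR d) <= (2 * ln R0 + 4) * S.
Proof.
  intros HR0 HL S.
  pose proof (exp_ineq1_le 1) as He.
  set (w := ln L).
  assert (Hw1 : 1 <= w) by (rewrite <- (ln_exp 1); apply ln_le_compat; [apply exp_pos | exact HL]).
  assert (HwL : w <= L - 1) by (apply ln_le_sub1; lra).
  assert (HS2 : S * S = L * w) by (apply sqrt_sqrt; nra).
  assert (HS0 : 0 <= S) by apply sqrt_pos.
  assert (HS1 : 1 <= S) by nra.
  assert (HSL : S <= L) by nra.
  (* The depth is about [S / ln L = sqrt (L / ln L)]. *)
  set (u := S / w).
  assert (Huw : u * w = S) by (unfold u; field; lra).
  assert (HuS : u * S = L) by (unfold u; apply (Rmult_eq_reg_r w); [field_simplify; nra | lra] ).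
  assert (Hu1 : 1 <= u) by nra.
  destruct (ceil_nat u ltac:(lra)) as [Hd1 Hd2].
  assert (Hd : (1 <= Z.to_nat (up u))%nat) by (apply INR_le; rewrite INR_1; lra).
  exists (Z.to_nat (up u)); set (d := INR (Z.to_nat (up u))) in *.
  assert (Hlnd : ln d <= 1 + w).
  { apply Rle_trans with (ln (2 * S)); [apply ln_le_compat; nra|].
    rewrite ln_mult by lra; pose proof (ln_le_compat S L ltac:(lra) HSL).
    pose proof (ln_le_compat 2 (exp 1) ltac:(lra) ltac:(lra)) as Hln2; rewrite ln_exp in Hln2.
    fold w in H; lra. }
  assert (HlnR0 : 0 <= ln R0) by (rewrite <- ln_1; apply ln_le_compat; lra).
  assert (Hlnd0 : 0 <= ln d) by (rewrite <- ln_1; apply ln_le_compat; lra).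
  assert (HuS' : u <= S) by nra.
  repeat split; [exact Hd | exact HS1 | lra | nra |].
  rewrite ln_mult by lra.
  assert (d * ln R0 <= 2 * S * ln R0) by nra.
  assert (d * ln d <= 2 * u * (1 + w)) by nra.
  nra.
Qed.

Lemma eventually_sqrt_mul_ln_le q :
  exists L0, forall L, L0 <= L -> exp 1 <= L /\ q * sqrt (L * ln L) <= L.
Proof.
  exists (Rmax (exp 1) ((2 * q * q) ^ 2)); intros L HL.
  pose proof (Rmax_l (exp 1) ((2 * q * q) ^ 2)); pose proof (Rmax_r (exp 1) ((2 * q * q) ^ 2)).
  pose proof (exp_ineq1_le 1).
  split; [lra|].
  assert (Hln0 : 0 <= ln L) by (rewrite <- ln_1; apply ln_le_compat; lra).
  set (v := sqrt L).
  assert (Hv2 : v * v = L) by (apply sqrt_sqrt; lra).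
  assert (Hv0 : 0 <= v) by apply sqrt_pos.
  assert (Hqv : 2 * q * q <= v)
    by (destruct (Rle_or_lt (2 * q * q) v); [assumption | nra]).
  (* [ln L = 2 ln (sqrt L) <= 2 sqrt L] *)
  assert (Hln : ln L <= 2 * v).
  { rewrite <- Hv2, ln_mult by nra; pose proof (ln_le_sub1 v ltac:(nra)); lra. }
  assert (Ht : sqrt (L * ln L) * sqrt (L * ln L) = L * ln L) by (apply sqrt_sqrt; nra).
  assert (Hq1 : q * q * ln L <= v * v) by nra.
  assert (Hq2 : L * (q * q * ln L) <= L * (v * v)) by (apply Rmult_le_compat_l; lra).
  rewrite Hv2 in Hq2.
  apply Rsqr_incr_0_var; [unfold Rsqr; nra | lra].
Qed.

Lemma cost_exponent_le K c d b r L S :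
  1 <= K -> 1 <= S -> (1 <= d)%nat -> INR d <= 2 * S -> 1 <= b -> 0 < r ->
  b ^ d <= exp L -> L <= INR d * S -> INR d * ln r <= c * S ->
  K * 2 ^ d * (INR d * b * r ^ d) <= exp ((ln K + 5 + c) * S).
Proof.
  intros HK HS Hd1 Hd Hb Hr HbL HLd Hrd.
  assert (HlnK : 0 <= ln K) by (rewrite <- ln_1; apply ln_le_compat; lra).
  assert (HK' : K <= exp (ln K * S))
    by (rewrite <- (exp_ln K) at 1 by lra; apply exp_le_compat; nra).
  assert (H2d : 2 ^ d <= exp (2 * S)) by (eapply Rle_trans; [apply pow2_le_exp | apply exp_le_compat; lra]).
  assert (Hdd : INR d <= exp (2 * S))
    by (pose proof (exp_ineq1_le (2 * S)); lra).
  assert (Hbd : b <= exp S).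
  { apply ln_le_cancel; [lra | apply exp_pos|]; rewrite ln_exp.
    apply (le_INR 1) in Hd1; rewrite INR_1 in Hd1.
    apply (ln_le_compat (b ^ d)) in HbL; [|apply pow_lt; lra]; rewrite ln_pow, ln_exp in HbL by lra.
    apply (Rmult_le_reg_l (INR d)); lra. }
  assert (Hrd' : r ^ d <= exp (c * S))
    by (rewrite <- (exp_ln (r ^ d)), ln_pow by (try apply pow_lt; lra); apply exp_le_compat; lra).
  replace (K * 2 ^ d * (INR d * b * r ^ d)) with (K * (2 ^ d * (INR d * (b * r ^ d)))) by ring.
  replace ((ln K + 5 + c) * S) with (ln K * S + (2 * S + (2 * S + (S + c * S)))) by ring.
  rewrite !exp_plus.
  pose proof (pow_le 2 d ltac:(lra)); pose proof (pos_INR d); pose proof (pow_le r d ltac:(lra)).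
  apply Rmult_le_compat; [lra | repeat apply Rmult_le_pos; lra | exact HK' |].
  apply Rmult_le_compat; [lra | repeat apply Rmult_le_pos; lra | exact H2d |].
  apply Rmult_le_compat; [lra | repeat apply Rmult_le_pos; lra | exact Hdd |].
  apply Rmult_le_compat; lra.
Qed.

Lemma sorting_at_scale eps delta R0 n :
  0 < delta <= 1 -> delta <= eps -> 4 / delta <= INR R0 -> 0 < INR n ->
  let L := ln (INR n) in
  let S := sqrt (L * ln L) in
  let c := 2 * ln (INR R0) + 4 in
  exp 1 <= L -> 2 * c * S <= L ->
  exists A : online_alg, forall s, length s = n -> Forall in01 s ->
    valid_run A (num_cells (1 + eps) n) s /\
    run_cost A (num_cells (1 + eps) n) s <= exp ((ln (32 * (1 + eps) / delta + 2) + 5 + c) * S).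
Proof.
  intros Hdelta Heps HR0 Hn L S c HL HcS.
  assert (HR01 : 1 <= INR R0) by (apply le_of_div_le in HR0; nra).
  assert (HlnR0 : 0 <= ln (INR R0)) by (rewrite <- ln_1; apply ln_le_compat; lra).
  assert (Hsqrt : sqrt (INR n) = exp (L / 2))
    by (rewrite <- Rpower_sqrt by exact Hn; unfold Rpower, L; f_equal; field).
  destruct (depth_choice (INR R0) L HR01 HL) as (d & Hd1 & HS1 & Hd2S & HLd & Hdlog).
  fold S c in HS1, Hd2S, HLd, Hdlog.
  assert (Hr : 0 < INR (R0 * d)) by (rewrite mult_INR; apply (le_INR 1) in Hd1; simpl in Hd1; nra).
  destruct (sorting_with_depth eps delta n R0 d Hdelta Heps Hd1 HR0) as (B & A & HB1 & HBd & HA).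
  - rewrite Hsqrt; apply ln_le_cancel; [apply pow_lt, Hr | apply exp_pos |].
    rewrite ln_pow, ln_exp, mult_INR by exact Hr; lra.
  - (* [16 / delta <= 4 R0 <= exp (2 + ln R0) <= exp (c S)] *)
    apply Rle_trans with (4 * INR R0); [unfold Rdiv in *; lra|].
    rewrite Hsqrt, <- (exp_ln (4 * INR R0)), ln_mult by lra; apply exp_le_compat.
    replace 4 with (2 * 2) by ring; rewrite ln_mult by lra.
    pose proof (ln_le_compat 2 (exp 1) ltac:(lra) ltac:(pose proof (exp_ineq1_le 1); lra)) as Hln2.
    rewrite ln_exp in Hln2; unfold c in HcS; nra.
  - exists A; intros s Hlen Hin; destruct (HA s Hlen Hin) as [Hv Hc]; split; [exact Hv|].
    eapply Rle_trans; [exact Hc|].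
    apply (cost_exponent_le _ c d (INR B) (INR (R0 * d)) L S); try assumption.
    + assert (0 < 32 * (1 + eps) / delta) by (apply Rdiv_lt_0_compat; lra); lra.
    + rewrite <- (exp_ln (INR n)) in HBd by exact Hn; exact HBd.
    + rewrite mult_INR; exact Hdlog.
Qed.

Theorem theorem4 :
  forall eps : R, 0 < eps ->
  exists (C : R) (N0 : nat),
    forall n : nat, (N0 <= n)%nat ->
    exists A : online_alg,
      forall s : list R,
        length s = n ->
        Forall (fun x => 0 <= x <= 1) s ->
        valid_run A (num_cells (1 + eps) n) s /\
        run_cost A (num_cells (1 + eps) n) s
          <= Rpower 2 (C * sqrt (ln (INR n) * ln (ln (INR n)))).
Proof.
  intros eps Heps.
  set (delta := Rmin eps 1).
  assert (Hdelta : 0 < delta <= 1) by (split; [apply Rmin_glb_lt | apply Rmin_r]; lra).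
  set (R0 := Z.to_nat (up (4 / delta))).
  assert (HR0 : 4 / delta <= INR R0)
    by (apply Rlt_le, ceil_nat, Rlt_le, Rdiv_lt_0_compat; lra).
  set (c := 2 * ln (INR R0) + 4).
  set (K := 32 * (1 + eps) / delta + 2).
  destruct (eventually_sqrt_mul_ln_le (2 * c)) as (L0 & HL0).
  exists ((ln K + 5 + c) / ln 2), (Z.to_nat (up (exp L0))).
  intros n Hn; apply le_INR in Hn.
  pose proof (ceil_nat (exp L0) (Rlt_le _ _ (exp_pos L0))); pose proof (exp_pos L0).
  assert (HL : L0 <= ln (INR n)) by (rewrite <- (ln_exp L0); apply ln_le_compat; lra).
  destruct (HL0 _ HL) as [He HcS].
  destruct (sorting_at_scale eps delta R0 n Hdelta (Rmin_l eps 1) HR0 ltac:(lra) He HcS)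
    as [A HA].
  exists A; intros s Hlen Hin; destruct (HA s Hlen Hin) as [Hv Hc]; split; [exact Hv|].
  pose proof ln_lt_2; unfold Rpower.
  replace ((ln K + 5 + c) / ln 2 * sqrt (ln (INR n) * ln (ln (INR n))) * ln 2)
    with ((ln K + 5 + c) * sqrt (ln (INR n) * ln (ln (INR n)))) by (field; lra).
  exact Hc.
Qed.
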